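(* Let $c\ge 1$ be an integer and consider the equivalence relation on $S_n$ generated by the replacement partition of $S_{c+1}$ whose only nontrivial part is $\{x\in S_{c+1}: x_1=1\}$. Let $f(n)$ denote the number of equivalence classes in $S_n$ (with $f(0)=1$), and for positive integers $k,n$ let $g(k,n)$ be the number of classes in $S_n$ containing at least one $k$-squished permutation. Then $$f(n)=\begin{cases} n!, & n<c+1,\\ \displaystyle\sum_{j=1}^{n} f(j-1)\, g(1,n-j+1)\binom{n-1}{j-1}, & n\ge c+1.\end{cases}$$
   Context: Permutations are written in one-line notation as words. The order permutation (standardization) of a word $u$ of distinct positive integers of length $\ell$ is the unique $\pi\in S_\ell$ with $\pi_i<\pi_j$ iff $u_i<u_j$. The equivalence is generated by declaring $\phi\equiv\psi$ whenever $\phi=aub$ and $\psi=avb$ for words $a,b,u,v$ with $u,v$ of length $c+1$ whose order permutations both begin with $1$ (i.e., the first letter of $u$ is the smallest letter of $u$, and likewise for $v$). A permutation of $S_n$ is $k$-squished if for each $j\le k$, the letter $j$ occurs among the first $c(j-1)+1$ positions. *)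

From Stdlib Require Import Relations ClassicalEpsilon.
From mathcomp Require Import all_boot all_fingroup.
Set Implicit Arguments. Unset Strict Implicit. Unset Printing Implicit Defensive.

Definition word n (s : 'S_n) : seq nat := [seq (s i).+1 | i <- enum 'I_n].

(* The order permutation of u begins with 1: u is nonempty and its first
   letter is smaller than all its other letters. *)
Definition first_min (u : seq nat) : bool :=
  if u is x :: u' then all (fun y => x < y) u' else false.

Definition step (c : nat) (phi psi : seq nat) : Prop :=
  exists a b u v : seq nat,
    [/\ phi = a ++ u ++ b, psi = a ++ v ++ b,
        size u = c.+1 /\ size v = c.+1 & first_min u /\ first_min v].

Definition equiv (c n : nat) : relation 'S_n :=
  clos_refl_sym_trans 'S_n (fun s t => step c (word s) (word t)).

Definition equivb (c n : nat) (s t : 'S_n) : bool :=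
  if excluded_middle_informative (equiv c s t) then true else false.

Definition classes (c n : nat) : {set {set 'S_n}} :=
  [set [set t | equivb c s t] | s : 'S_n].

Definition f (c n : nat) : nat := #|classes c n|.

Definition squished (c k n : nat) (s : 'S_n) : bool :=
  [forall j : 'I_k.+1, (0 < j) ==> (nat_of_ord j \in take (c * j.-1).+1 (word s))].

Definition g (c k n : nat) : nat :=
  #|[set C in classes c n | [exists s in C, squished c k s]]|.

From Stdlib Require Import Relations ClassicalEpsilon.
From Pilot Require Import Defs.
From mathcomp Require Import all_boot all_fingroup zify.
Set Implicit Arguments. Unset Strict Implicit. Unset Printing Implicit Defensive.

(* The letter 1 is smaller than every other letter, so a replacement window
   containing 1 must start with 1: every replacement acts either inside the part
   of the word before 1 or inside the part starting at 1.  Hence two permutations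
   are equivalent iff they have the same set A of letters before 1, equivalent
   standardized prefixes in S_|A|, and equivalent standardized suffixes, which
   are exactly the permutations of S_(n-|A|) starting with 1, i.e. the
   1-squished ones.  Summing f(|A|) g(1, n-|A|) over the 'C(n-1, j-1) sets A of
   size j-1 not containing 1 gives the recurrence; for n <= c no window fits, so
   the classes are singletons. *)

Lemma first_min_head (u v : seq nat) :
  first_min u -> first_min v -> perm_eq u v -> head 0 u = head 0 v.
Proof.
case: u v => [|x u] [|y v] //= /allP xu /allP yv xyuv.
apply: contra_eq isT => /negPf neq_xy.
have /xu x_lt_y : y \in u.
  by have := mem_head y v; rewrite -(perm_mem xyuv) in_cons eq_sym neq_xy.
have /yv y_lt_x : x \in v.
  by have := mem_head x u; rewrite (perm_mem xyuv) in_cons neq_xy.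
by move: (ltn_trans x_lt_y y_lt_x); rewrite ltnn.
Qed.

Lemma cat_cons_prefix (T : eqType) (x : T) p q u b : x \notin u ->
  p ++ x :: q = u ++ b -> exists2 r, p = u ++ r & b = r ++ x :: q.
Proof.
elim: u p => [|y u IHu] p; first by move=> _ /= <-; exists p.
rewrite in_cons => /norP[x_neq_y xNu]; case: p => [|z p] [].
  by move=> xy; rewrite xy eqxx in x_neq_y.
by move=> <- /(IHu _ xNu)[r -> ->]; exists r.
Qed.

Lemma window_around_min m p q a u b :
  all (fun l => m < l) p -> all (fun l => m < l) q -> first_min u ->
  p ++ m :: q = a ++ u ++ b ->
  [\/ exists2 r, p = a ++ u ++ r & b = r ++ m :: q,
      exists2 r, a = p ++ m :: r & q = r ++ u ++ b
    | exists u', [/\ a = p, u = m :: u' & q = u' ++ b]].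
Proof.
move=> + mq fu; elim: p a => [|x p IHp] [|y a] //= mp.
- by case: u fu => // l u _ [<- ->]; apply: Or33; exists u.
- by case=> <- ->; apply: Or32; exists a.
- move: mp => /andP[mx _] e; apply: Or31; clear IHp.
  have mNu : m \notin u.
    case eu: u fu => [//|y u'] /allP yu; move: e; rewrite eu => -[xy _]; subst y.
    by rewrite in_cons negb_or neq_ltn mx /=; apply/negP => /yu; rewrite ltnNge (ltnW mx).
  by have [r -> ->] := cat_cons_prefix (p := x :: p) mNu e; exists r.
- move: mp => /andP[_ mp] [<- /(IHp _ mp)] [[r -> ->] | [r -> ->] | [u' [-> eu ->]]].
  + by apply: Or31; exists r.
  + by apply: Or32; exists r.
  + by apply: Or33; exists u'.
Qed.

Section Rewriting.
Variable c : nat.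

(* On one-line words of permutations [perm_eq u v] is automatic; on arbitrary
   words it makes the rewriting content-preserving. *)
Definition rstep (x y : seq nat) : Prop :=
  exists a b u v, [/\ x = a ++ u ++ b, y = a ++ v ++ b, size u = c.+1,
                      first_min u & first_min v /\ perm_eq u v].

Definition requiv : relation (seq nat) := clos_refl_trans _ rstep.

Lemma rstep_sym x y : rstep x y -> rstep y x.
Proof.
case=> a [b] [u] [v] [-> -> su fu [fv uv]].
by exists a, b, v, u; rewrite -(perm_size uv) perm_sym.
Qed.

Lemma rstep_perm x y : rstep x y -> perm_eq x y.
Proof. by case=> a [b] [u] [v] [-> -> _ _ [_ uv]]; rewrite perm_cat2l perm_cat2r. Qed.

Lemma requiv_refl x : requiv x x. Proof. exact: rt_refl. Qed.

Lemma requiv_trans x y z : requiv x y -> requiv y z -> requiv x z.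
Proof. exact: rt_trans. Qed.

Lemma requiv_sym x y : requiv x y -> requiv y x.
Proof.
elim=> [{}x {}y xy | {}x | {}x {}y z _ yx _ zy].
- exact/rt_step/rstep_sym.
- exact: requiv_refl.
- exact: requiv_trans zy yx.
Qed.

Lemma requiv_perm x y : requiv x y -> perm_eq x y.
Proof.
elim=> [{}x {}y /rstep_perm | {}x | {}x {}y z _ xy _ yz] //.
exact: perm_trans xy yz.
Qed.

Lemma requiv_cat p p' q q' : requiv p p' -> requiv q q' -> requiv (p ++ q) (p' ++ q').
Proof.
have catl r x y : requiv x y -> requiv (r ++ x) (r ++ y).
  elim=> [{}x {}y [a [b [u [v [-> -> su fu fv]]]]] | {}x | {}x {}y z _ xy _ yz].
  - by apply: rt_step; exists (r ++ a), b, u, v; rewrite !catA.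
  - exact: requiv_refl.
  - exact: requiv_trans xy yz.
have catr r x y : requiv x y -> requiv (x ++ r) (y ++ r).
  elim=> [{}x {}y [a [b [u [v [-> -> su fu fv]]]]] | {}x | {}x {}y z _ xy _ yz].
  - by apply: rt_step; exists a, (b ++ r), u, v; rewrite -!catA.
  - exact: requiv_refl.
  - exact: requiv_trans xy yz.
by move=> /(catr q) pp' /(catl p') qq'; apply: requiv_trans pp' qq'.
Qed.

Lemma requiv_short x y : size x <= c -> requiv x y -> x = y.
Proof.
move=> + xy; elim: xy => [{}x {}y [a [b [u [v [-> _ su _ _]]]]] | // | {}x {}y z _ IHxy _ IHyz sx].
  by rewrite !size_cat su; lia.
by have exy := IHxy sx; rewrite exy IHyz // -exy.
Qed.

Lemma requiv_map (h : nat -> nat) (L : seq nat) x y :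
  {in L &, {homo h : l l' / l < l'}} -> all (mem L) x ->
  requiv x y -> requiv (map h x) (map h y).
Proof.
move=> h_mono + xy; elim: {xy}(clos_rt_rt1n _ _ _ _ xy) => [{}x _ | {}x {}y z xy _ IHyz xL].
  exact: requiv_refl.
have first_min_h u : all (mem L) u -> first_min u -> first_min (map h u).
  case: u => //= l u /andP[lL uL] /allP lu.
  by apply/allP => _ /mapP[l' l'u ->]; apply: h_mono (lu _ l'u) => //; apply: (allP uL).
apply: requiv_trans (IHyz _); last by rewrite -(perm_all _ (rstep_perm xy)).
case: xy xL => a [b] [u] [v] [-> -> su fu [fv uv]].
rewrite !all_cat => /and3P[_ uL _]; have vL : all (mem L) v by rewrite -(perm_all _ uv).
apply: rt_step; exists (map h a), (map h b), (map h u), (map h v); rewrite !map_cat.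
by split; rewrite ?size_map ?first_min_h ?perm_map.
Qed.

Lemma rstep_split_min m p q y :
  all (fun l => m < l) p -> all (fun l => m < l) q -> rstep (p ++ m :: q) y ->
  exists p' q', [/\ y = p' ++ m :: q', requiv p p' & requiv (m :: q) (m :: q')].
Proof.
move=> mp mq [a [b [u [v [e -> su fu [fv uv]]]]]].
have step := @rt_step _ rstep.
case: (window_around_min mp mq fu e) => [[r -> ->] | [r -> ->] | [u' [-> eu ->]]].
- exists (a ++ v ++ r), q; rewrite -!catA; split=> //; last exact: requiv_refl.
  by apply: step; exists a, r, u, v.
- exists p, (r ++ v ++ b); rewrite -catA; split=> //; first exact: requiv_refl.
  by apply: step; exists (m :: r), b, u, v.
- subst u; have [v' ev] : exists v', v = m :: v'.
    by case: v fv uv (first_min_head fu fv uv) => // w v' _ _ /= <-; exists v'.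
  subst v; exists p, (v' ++ b); split=> //; first exact: requiv_refl.
  by apply: step; exists [::], b, (m :: u'), (m :: v').
Qed.

Lemma requiv_split_min m p q z :
  all (fun l => m < l) p -> all (fun l => m < l) q -> requiv (p ++ m :: q) z ->
  exists p' q', [/\ z = p' ++ m :: q', requiv p p' & requiv (m :: q) (m :: q')].
Proof.
move=> mp mq xz; have [x ex] : exists x, p ++ m :: q = x by exists (p ++ m :: q).
rewrite ex in xz; elim: {xz}(clos_rt_rt1n _ _ _ _ xz) p q ex mp mq.
  by move=> {}x p q <- mp mq; exists p, q; split=> //; apply: requiv_refl.
move=> {}x y {}z xy _ IHyz p q ex mp mq; subst x.
have [p1 [q1 [ey pp1 qq1]]] := rstep_split_min mp mq xy.
have mp1 : all (fun l => m < l) p1 by rewrite -(perm_all _ (requiv_perm pp1)).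
have mq1 : all (fun l => m < l) q1.
  by have := requiv_perm qq1; rewrite perm_cons => /perm_all <-.
have [p2 [q2 [-> p1p2 q1q2]]] := IHyz p1 q1 (esym ey) mp1 mq1.
by exists p2, q2; split; [| exact: requiv_trans pp1 p1p2 | exact: requiv_trans qq1 q1q2].
Qed.

Lemma requiv_cat_min m p q p' q' :
  all (fun l => m < l) p -> all (fun l => m < l) q -> m \notin p' ->
  requiv (p ++ m :: q) (p' ++ m :: q') <-> requiv p p' /\ requiv (m :: q) (m :: q').
Proof.
move=> mp mq mNp'; split=> [/(requiv_split_min mp mq) [p1 [q1 [e pp1 qq1]]] | [pp' qq']].
  have mNp1 : m \notin p1.
    by rewrite -(perm_mem (requiv_perm pp1)); apply/negP => /(allP mp); rewrite ltnn.
  have sp : size p' = size p1.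
    by have := congr1 (index m) e; rewrite !index_cat (negPf mNp1) (negPf mNp') /= eqxx !addn0.
  by move/eqP: e; rewrite eqseq_cat // => /andP[/eqP -> /eqP ->].
exact: requiv_cat.
Qed.

End Rewriting.

Section Standardization.
Variable S : seq nat.
Hypothesis S_sorted : sorted ltn S.

Definition std (w : seq nat) := [seq (index x S).+1 | x <- w].
Definition unstd (w : seq nat) := [seq nth 0 S x.-1 | x <- w].

Let S_uniq : uniq S := sorted_uniq ltn_trans ltnn S_sorted.

Lemma std_unstd (w : seq nat) : all (fun x => 0 < x <= size S) w -> std (unstd w) = w.
Proof.
move=> /allP wS; rewrite /std /unstd -map_comp -[RHS]map_id.
apply/eq_in_map => x /wS /andP[x_gt0 xS] /=.
by rewrite index_uniq ?prednK // prednK.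
Qed.

Lemma unstd_std (w : seq nat) : all (mem S) w -> unstd (std w) = w.
Proof.
move=> /allP wS; rewrite /std /unstd -map_comp -[RHS]map_id.
by apply/eq_in_map => x /wS xS /=; apply: nth_index.
Qed.

Lemma std_perm (w : seq nat) : perm_eq w S -> perm_eq (std w) (iota 1 (size S)).
Proof.
have -> : iota 1 (size S) = std S.
  apply: (@eq_from_nth _ 0) => [|i]; rewrite /std ?size_map ?size_iota // => iS.
  by rewrite (nth_map 0) // index_uniq // nth_iota // add1n.
exact: perm_map.
Qed.

Lemma unstd_perm (w : seq nat) : perm_eq w (iota 1 (size S)) -> perm_eq (unstd w) S.
Proof.
have {2}-> : S = unstd (iota 1 (size S)).
  apply: (@eq_from_nth _ 0) => [|i]; rewrite /unstd ?size_map ?size_iota // => iS.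
  by rewrite (nth_map 0) ?size_iota // nth_iota.
exact: perm_map.
Qed.

Lemma requiv_std c (x y : seq nat) : perm_eq x S -> perm_eq y S ->
  requiv c x y <-> requiv c (std x) (std y).
Proof.
move=> xS yS; have memS w : perm_eq w S -> all (mem S) w.
  by move=> wS; apply/allP => l; rewrite (perm_mem wS).
split=> [|xy].
  apply: requiv_map (memS x xS) => l l' lS l'S ll'; rewrite ltnS.
  case: ltngtP => // [l'l|]; last by move/(congr1 (nth 0 S)); rewrite !nth_index //; lia.
  by have := sorted_ltn_index ltn_trans S_sorted l' l l'S lS l'l; lia.
rewrite -(unstd_std (memS x xS)) -(unstd_std (memS y yS)).
apply: (requiv_map (L := iota 1 (size S))) xy => [l l'|]; last first.
  by apply/allP => l; rewrite (perm_mem (std_perm xS)).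
rewrite !mem_iota => lS l'S ll'.
by apply: (sorted_ltn_nth ltn_trans 0 S_sorted); rewrite ?inE; lia.
Qed.

End Standardization.

Lemma leq_card_imset_ker (T K K' : finType) (D : {set T}) (F : T -> K) (G : T -> K') :
  {in D &, forall s t, F s = F t -> G s = G t} -> #|G @: D| <= #|F @: D|.
Proof.
move=> FG; have [-> | [s0 s0D]] := set_0Vmem D; first by rewrite !imset0 cards0.
pose H k := G (odflt s0 [pick s in D | F s == k]).
suff -> : G @: D = H @: (F @: D) by apply: leq_imset_card.
apply/setP => y; apply/imsetP/imsetP => [[s sD ->] | [_ /imsetP[s sD ->] ->]].
  exists (F s); first exact: imset_f.
  by rewrite /H; case: pickP => [t /andP[tD /eqP /FG ->] | /(_ s)]; rewrite ?sD ?eqxx.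
by rewrite /H; case: pickP => [t /andP[tD _] | _]; [exists t | exists s0].
Qed.

Lemma card_imset_ker (T K K' : finType) (D : {set T}) (F : T -> K) (G : T -> K') :
  {in D &, forall s t, (F s == F t) = (G s == G t)} -> #|F @: D| = #|G @: D|.
Proof.
move=> FG; apply/eqP; rewrite eqn_leq !leq_card_imset_ker // => s t sD tD /eqP.
  by rewrite FG // => /eqP.
by rewrite -FG // => /eqP.
Qed.

Lemma card_imset_fibers (T I K : finType) (h : T -> I) (F : T -> K) :
  (forall s t, F s = F t -> h s = h t) ->
  #|[set F s | s : T]| = \sum_(i : I) #|F @: [set s | h s == i]|.
Proof.
have -> : [set F s | s : T] = F @: [set: T].
  by apply/setP => k; apply/imsetP/imsetP => -[s _ ->]; exists s.
move=> Fh; rewrite (@card_imset_ker _ _ _ _ F (fun s => (h s, F s))); last first.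
  by move=> s t _ _; apply/eqP/eqP => [st | [] //]; rewrite st (Fh _ _ st).
rewrite -sum1_card (partition_big fst predT) //=; apply: eq_bigr => i _.
rewrite (@card_imset_ker _ _ _ _ F (fun s => (i, F s))); last first.
  by move=> s t _ _; apply/eqP/eqP => [-> | [] ->].
rewrite -sum1_card; apply: eq_bigl => -[j k] /=.
apply/andP/imsetP => [[/imsetP[s _ [-> ->]] /eqP hs] | [s]].
  by exists s; rewrite ?inE hs.
by rewrite inE => /eqP <- [-> ->]; split; [apply: imset_f | ].
Qed.

Lemma sum_subsets_card (T : finType) (B : {set T}) (F : nat -> nat) :
  \sum_(A : {set T} | A \subset B) F #|A| = \sum_(k < #|B|.+1) 'C(#|B|, k) * F k.
Proof.
rewrite (partition_big (fun A : {set T} => inord #|A| : 'I_#|B|.+1) predT) //=.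
apply: eq_bigr => k _; rewrite -cards_draws -sum_nat_const.
apply: eq_big => [A | A /andP[AB /eqP <-]]; last by rewrite inordK // ltnS subset_leq_card.
rewrite inE; apply: andb_id2l => AB.
by rewrite -(inj_eq val_inj) /= inordK // ltnS subset_leq_card.
Qed.

Lemma word_perm n (s : 'S_n) : perm_eq (word s) (iota 1 n).
Proof.
apply: uniq_perm.
- by rewrite map_inj_uniq ?enum_uniq // => i j /succn_inj /val_inj /perm_inj.
- exact: iota_uniq.
move=> l; rewrite mem_iota add1n ltnS; apply/mapP/idP => [[i _ ->] /= | ].
  exact: ltn_ord.
case: l => [|l] //= l_lt_n.
by exists (s^-1 (Ordinal l_lt_n))%g; rewrite ?mem_enum ?permKV.
Qed.

Lemma word_uniq n (s : 'S_n) : uniq (word s).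
Proof. by rewrite (perm_uniq (word_perm s)) iota_uniq. Qed.

Lemma mem_word n (s : 'S_n) l : (l \in word s) = (0 < l <= n).
Proof. by rewrite (perm_mem (word_perm s)) mem_iota add1n ltnS. Qed.

Lemma nth_word n (s : 'S_n) (i : 'I_n) : nth 0 (word s) i = (s i).+1.
Proof. by rewrite (nth_map i) ?size_enum_ord // nth_ord_enum. Qed.

Lemma word_inj n : injective (@word n).
Proof.
move=> s t st; apply/permP => i; apply/val_inj/succn_inj.
by rewrite -!nth_word st.
Qed.

Lemma word_surj n w : perm_eq w (iota 1 n) -> exists s : 'S_n, word s = w.
Proof.
move=> w_perm.
have words_uniq : uniq [seq word s | s <- enum 'S_n].
  by rewrite map_inj_uniq ?enum_uniq //; apply: word_inj.
have words_sub : {subset [seq word s | s <- enum 'S_n] <= permutations (iota 1 n)}.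
  by move=> _ /mapP[s _ ->]; rewrite mem_permutations word_perm.
have words_size : size (permutations (iota 1 n)) <= size [seq word s | s <- enum 'S_n].
  by rewrite size_permutations ?iota_uniq // size_iota size_map -cardE card_Sn.
have [_ /(_ w)] := uniq_min_size words_uniq words_sub words_size.
by rewrite mem_permutations w_perm => /mapP[s _ ->]; exists s.
Qed.

Definition perm_of_word n (w : seq nat) : 'S_n := odflt 1%g [pick s : 'S_n | word s == w].

Lemma perm_of_wordK n (w : seq nat) : perm_eq w (iota 1 n) -> word (perm_of_word n w) = w.
Proof.
move=> /word_surj[s <-]; rewrite /perm_of_word.
by case: pickP => [t /eqP // | /(_ s)]; rewrite eqxx.
Qed.

Lemma word_perm_of_word n (s : 'S_n) : perm_of_word n (word s) = s.
Proof. by apply: word_inj; rewrite perm_of_wordK ?word_perm. Qed.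

Lemma size_word n (s : 'S_n) : size (word s) = n.
Proof. by rewrite (perm_size (word_perm s)) size_iota. Qed.

Section Classes.
Variables c n : nat.

Lemma equivP (s t : 'S_n) : Defs.equiv c s t <-> requiv c (word s) (word t).
Proof.
split.
  elim=> [{}s {}t [a [b [u [v [es et [su sv] [fu fv]]]]]] | {}s | {}s {}t _ | {}s {}t r _ st _ tr].
  - apply: rt_step; exists a, b, u, v; split=> //; split=> //.
    have : perm_eq (word s) (word t) by rewrite (permPr (word_perm t)) word_perm.
    by rewrite es et perm_cat2l perm_cat2r.
  - exact: requiv_refl.
  - exact: requiv_sym.
  - exact: requiv_trans st tr.
move=> /(clos_rt_rt1n _ _ _ _).
move ew : (word s) => x; move et : (word t) => z xz.
elim: xz s ew et => [{}x | {}x y {}z xy _ IHyz] s ew et.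
  by rewrite (word_inj (etrans ew (esym et))); apply: rst_refl.
have [t' et'] : exists t' : 'S_n, word t' = y.
  by apply: word_surj; rewrite -(permPl (rstep_perm xy)) -ew word_perm.
apply: rst_trans (IHyz t' et' et); apply: rst_step.
case: xy => a [b] [u] [v] [ex ey su fu [fv uv]].
by exists a, b, u, v; rewrite ew et' -(perm_size uv).
Qed.

Lemma equivbP (s t : 'S_n) : reflect (requiv c (word s) (word t)) (equivb c s t).
Proof. by rewrite /equivb; case: excluded_middle_informative => st; constructor; apply/equivP. Qed.

Definition eclass (s : 'S_n) : {set 'S_n} := [set t | equivb c s t].

Lemma eclass_eq (s t : 'S_n) : (eclass s == eclass t) = equivb c s t.
Proof.
have eclass_refl r : r \in eclass r by rewrite inE; apply/equivbP/requiv_refl.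
apply/eqP/equivbP => [st | /requiv_sym ts].
  by have := eclass_refl t; rewrite -st inE => /equivbP.
apply/setP => r; rewrite !inE; apply/equivbP/equivbP => [sr | tr].
  exact: requiv_trans ts sr.
exact: requiv_trans (requiv_sym ts) tr.
Qed.

Lemma classesE : Defs.classes c n = [set eclass s | s : 'S_n].
Proof. by []. Qed.

Lemma g_eclass k : g c k n = #|[set eclass s | s in [set s | squished c k s]]|.
Proof.
apply: eq_card => C; rewrite inE classesE.
apply/andP/imsetP => [[/imsetP[s _ ->] /existsP[t /andP[st kt]]] | [t kt ->]].
  by rewrite inE in st; exists t; rewrite ?inE //; apply/eqP; rewrite eclass_eq.
split; first exact: imset_f.
by apply/existsP; exists t; rewrite inE in kt; rewrite kt andbT inE; apply/equivbP/requiv_refl.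
Qed.

End Classes.

Lemma f_small c n : n <= c -> f c n = n`!.
Proof.
move=> n_le_c; rewrite /f classesE card_imset ?card_Sn // => s t /eqP.
rewrite eclass_eq => /equivbP /requiv_short; rewrite size_word => /(_ n_le_c).
exact: word_inj.
Qed.

Section Letters.
Variable n : nat.

Definition letters (A : {set 'I_n}) : seq nat := [seq (val i).+1 | i <- enum 'I_n & i \in A].

Lemma letters_sorted (A : {set 'I_n}) : sorted ltn (letters A).
Proof.
rewrite sorted_map; apply: sorted_filter; first exact: ltn_trans.
rewrite -sorted_map map_comp val_enum_ord sorted_map.
exact: sub_sorted (iota_ltn_sorted 0 n).
Qed.

Lemma lettersP (A : {set 'I_n}) l :
  reflect (exists2 i : 'I_n, l = (val i).+1 & i \in A) (l \in letters A).
Proof.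
apply: (iffP mapP) => [[i] | [i -> iA]]; last by exists i; rewrite // mem_filter iA mem_enum.
by rewrite mem_filter => /andP[iA _] ->; exists i.
Qed.

Lemma mem_letters (A : {set 'I_n}) (i : 'I_n) : ((val i).+1 \in letters A) = (i \in A).
Proof.
by apply/lettersP/idP => [[j /succn_inj /val_inj -> //] | iA]; exists i.
Qed.

Lemma size_letters (A : {set 'I_n}) : size (letters A) = #|A|.
Proof.
rewrite size_map cardE; apply/perm_size/uniq_perm.
- exact/filter_uniq/enum_uniq.
- exact: enum_uniq.
by move=> i; rewrite mem_filter !mem_enum andbT.
Qed.

Lemma letters_uniq (A : {set 'I_n}) : uniq (letters A).
Proof. exact: sorted_uniq ltn_trans ltnn _ (letters_sorted A). Qed.

Lemma perm_letters_setC (A : {set 'I_n}) : perm_eq (letters A ++ letters (~: A)) (iota 1 n).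
Proof.
apply: uniq_perm.
- rewrite cat_uniq !letters_uniq andbT /=; apply/hasPn => _ /lettersP[i -> iNA].
  by rewrite mem_letters; rewrite inE in iNA.
- exact: iota_uniq.
move=> [|l]; rewrite mem_cat mem_iota add1n /=.
  by apply/negP => /orP[] /lettersP[].
rewrite ltnS; apply/idP/idP => [/orP[] /lettersP[i [->] _] | l_lt_n]; try exact: ltn_ord.
by rewrite -[l]/(val (Ordinal l_lt_n)) !mem_letters inE orbN.
Qed.

End Letters.

Lemma letters_ord0 n (A : {set 'I_n.+1}) : ord0 \in A -> letters A = 1 :: behead (letters A).
Proof. by rewrite /letters enum_ordSl /= => ->. Qed.

Section SplitAtOne.
Variables c n' : nat.
Local Notation n := n'.+1.
Implicit Types s t : 'S_n.

Definition pre s : seq nat := take (index 1 (word s)) (word s).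
Definition post s : seq nat := drop (index 1 (word s)).+1 (word s).

Lemma word_split s : word s = pre s ++ 1 :: post s.
Proof.
have one_in : 1 \in word s by rewrite mem_word.
by rewrite -{1}(cat_take_drop (index 1 (word s)) (word s)) (drop_nth 0) ?index_mem ?nth_index.
Qed.

Lemma split_gt1 s : all (fun l => 1 < l) (pre s ++ post s).
Proof.
have := word_uniq s; rewrite word_split -cat1s uniq_catCA cat1s cons_uniq => /andP[one_out _].
apply/allP => l l_in; have : l \in word s.
  by move: l_in; rewrite word_split !mem_cat in_cons => /orP[] ->; rewrite ?orbT.
rewrite mem_word => /andP[l_gt0 _]; rewrite ltn_neqAle l_gt0 andbT.
by apply: contraNneq one_out => ->.
Qed.

Lemma one_notin_pre s : 1 \notin pre s.
Proof.
apply/negP => one_pre; have := allP (split_gt1 s) 1.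
by rewrite mem_cat one_pre ltnn => /(_ isT).
Qed.

Lemma split_word_eq s p q : word s = p ++ 1 :: q -> 1 \notin p -> pre s = p /\ post s = q.
Proof.
move=> e one_notin_p; have /eqP := word_split s; rewrite e eqseq_cat.
  by case/andP=> /eqP -> /eqP [->].
have := congr1 (index 1) (word_split s); rewrite e !index_cat.
by rewrite (negPf one_notin_p) (negPf (one_notin_pre s)) !index_head !addn0 => ->.
Qed.

Lemma requiv_split s t : requiv c (word s) (word t) <->
  requiv c (pre s) (pre t) /\ requiv c (1 :: post s) (1 :: post t).
Proof.
have := split_gt1 s; rewrite all_cat => /andP[pre_gt1 post_gt1].
by rewrite !word_split; apply: requiv_cat_min; rewrite ?one_notin_pre.
Qed.

(* The letters before 1, shifted down by one so that they index into ['I_n]. *)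
Definition before s : {set 'I_n} := [set i | (val i).+1 \in pre s].

Lemma ord0_notin_before s : ord0 \notin before s.
Proof. by rewrite inE one_notin_pre. Qed.

Lemma before_equiv s t : equivb c s t -> before s = before t.
Proof.
move=> /equivbP /requiv_split [/requiv_perm pre_st _].
by apply/setP => i; rewrite !inE (perm_mem pre_st).
Qed.

Lemma pre_letters s : perm_eq (pre s) (letters (before s)).
Proof.
have := word_uniq s; rewrite word_split cat_uniq => /andP[pre_uniq _].
apply: (uniq_perm _ (letters_uniq _)) => // l.
apply/idP/lettersP => [l_pre | [i -> ]]; last by rewrite inE.
have : l \in word s by rewrite word_split mem_cat l_pre.
rewrite mem_word; case: l l_pre => //= l l_pre l_le_n.
by exists (Ordinal l_le_n); rewrite ?inE.
Qed.

Lemma post_letters s : perm_eq (1 :: post s) (letters (~: before s)).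
Proof.
have := word_uniq s; rewrite word_split cat_uniq => /and3P[_ pre_post post_uniq].
apply: (uniq_perm _ (letters_uniq _)) => // l.
apply/idP/lettersP => [l_post | [i -> ]].
  have : l \in word s by rewrite word_split mem_cat l_post orbT.
  rewrite mem_word; case: l l_post => //= l l_post l_le_n.
  exists (Ordinal l_le_n); rewrite // !inE.
  by apply: contraNN pre_post => l_pre; apply/hasP; exists l.+1.
rewrite !inE => i_post.
have : (val i).+1 \in word s by rewrite mem_word /=.
by rewrite word_split mem_cat (negPf i_post).
Qed.

End SplitAtOne.

Lemma squished1 c m (q : 'S_m) : squished c 1 q = (head 0 (word q) == 1).
Proof.
have -> : (head 0 (word q) == 1) = (1 \in take 1 (word q)).
  by case: (word q) => //= l w; rewrite take0 inE eq_sym.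
rewrite /squished; apply/forallP/idP => [/(_ (Ordinal (isT : 1 < 2))) | one_head [[|[|//]] /= _]];
  by rewrite /= ?muln0.
Qed.

Section Fiber.
Variables (c n' : nat) (A : {set 'I_n'.+1}).
Hypothesis ord0_notin_A : ord0 \notin A.
Local Notation n := n'.+1.
Local Notation SA := (letters A).
Local Notation SB := (letters (~: A)).
Implicit Types s t : 'S_n.

(* Only meaningful on permutations [s] with [before s = A]. *)
Definition perm_pre s : 'S_#|A| := perm_of_word _ (std SA (pre s)).
Definition perm_post s : 'S_#|~: A| := perm_of_word _ (std SB (1 :: post s)).

Definition glue (p : 'S_#|A|) (q : 'S_#|~: A|) : 'S_n :=
  perm_of_word n (unstd SA (word p) ++ unstd SB (word q)).

Lemma word_perm_pre s : before s = A -> word (perm_pre s) = std SA (pre s).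
Proof.
move=> sA; rewrite perm_of_wordK // -(size_letters A).
by apply: std_perm; rewrite ?letters_sorted // -sA pre_letters.
Qed.

Lemma word_perm_post s : before s = A -> word (perm_post s) = std SB (1 :: post s).
Proof.
move=> sA; rewrite perm_of_wordK // -(size_letters (~: A)).
by apply: std_perm; rewrite ?letters_sorted // -sA post_letters.
Qed.

Lemma equivb_fiber s t : before s = A -> before t = A ->
  equivb c s t = equivb c (perm_pre s) (perm_pre t) && equivb c (perm_post s) (perm_post t).
Proof.
move=> sA tA.
have pre_SA r : before r = A -> perm_eq (pre r) SA by move=> <-; apply: pre_letters.
have post_SB r : before r = A -> perm_eq (1 :: post r) SB by move=> <-; apply: post_letters.
have := requiv_split c s t.
rewrite (requiv_std (letters_sorted A) c (pre_SA s sA) (pre_SA t tA)).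
rewrite (requiv_std (letters_sorted (~: A)) c (post_SB s sA) (post_SB t tA)).
rewrite -!word_perm_pre // -!word_perm_post // => split_st.
by apply/equivbP/andP; rewrite split_st => -[/equivbP pst /equivbP qst].
Qed.

Lemma perm_post_squished s : before s = A -> squished c 1 (perm_post s).
Proof.
move=> sA; have ord0_B : ord0 \in ~: A by rewrite inE.
by rewrite squished1 word_perm_post //= (letters_ord0 ord0_B) index_head.
Qed.

Lemma word_glue p q : word (glue p q) = unstd SA (word p) ++ unstd SB (word q).
Proof.
apply: perm_of_wordK; rewrite -(permPr (perm_letters_setC A)).
by apply: perm_cat; apply: unstd_perm; rewrite size_letters word_perm.
Qed.

Lemma mem_unstd_pre (p : 'S_#|A|) l : (l \in unstd SA (word p)) = (l \in SA).
Proof. by rewrite (perm_mem (unstd_perm _)) // size_letters word_perm. Qed.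

Lemma glue_split p q : squished c 1 q ->
  pre (glue p q) = unstd SA (word p) /\ 1 :: post (glue p q) = unstd SB (word q).
Proof.
rewrite squished1 => /eqP q_head; have ord0_B : ord0 \in ~: A by rewrite inE.
have word_q : unstd SB (word q) = 1 :: unstd SB (behead (word q)).
  by case: (word q) q_head => //= _ w ->; rewrite (letters_ord0 ord0_B).
have one_notin_p : 1 \notin unstd SA (word p).
  by rewrite mem_unstd_pre -[1]/((val (ord0 : 'I_n)).+1) mem_letters.
have e : word (glue p q) = unstd SA (word p) ++ 1 :: unstd SB (behead (word q)).
  by rewrite word_glue word_q.
by have [-> ->] := split_word_eq e one_notin_p; rewrite word_q.
Qed.

Lemma before_glue p q : squished c 1 q -> before (glue p q) = A.
Proof.
case/(glue_split p) => pre_pq _; apply/setP => i.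
by rewrite inE pre_pq mem_unstd_pre mem_letters.
Qed.

Lemma perm_pre_glue p q : squished c 1 q -> perm_pre (glue p q) = p.
Proof.
move=> /(glue_split p)[pre_pq _].
rewrite /perm_pre pre_pq std_unstd ?letters_sorted ?word_perm_of_word //.
by apply/allP => l; rewrite mem_word size_letters.
Qed.

Lemma perm_post_glue p q : squished c 1 q -> perm_post (glue p q) = q.
Proof.
move=> /(glue_split p)[_ post_pq].
rewrite /perm_post post_pq std_unstd ?letters_sorted ?word_perm_of_word //.
by apply/allP => l; rewrite mem_word size_letters.
Qed.

Lemma card_fiber :
  #|[set eclass c s | s in [set s | before s == A]]| = f c #|A| * g c 1 #|~: A|.
Proof.
pose F s := (eclass c (perm_pre s), eclass c (perm_post s)).
rewrite (@card_imset_ker _ _ _ _ _ F); last first.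
  by move=> s t; rewrite !inE => /eqP sA /eqP tA; rewrite xpair_eqE !eclass_eq equivb_fiber.
rewrite /f classesE g_eclass -cardsX; congr #|pred_of_set _|.
apply/setP => -[X Y]; rewrite in_setX; apply/imsetP/andP => [[s] | [/imsetP[p _ ->]]].
  rewrite inE => /eqP sA [-> ->]; split; first exact: imset_f.
  by apply: imset_f; rewrite inE perm_post_squished.
case/imsetP=> q; rewrite inE => sq ->; exists (glue p q); first by rewrite inE before_glue.
by rewrite /F perm_pre_glue // perm_post_glue.
Qed.

End Fiber.

Lemma f_sum_before c n' : f c n'.+1 =
  \sum_(A : {set 'I_n'.+1} | ord0 \notin A) f c #|A| * g c 1 (n'.+1 - #|A|).
Proof.
rewrite /f classesE (@card_imset_fibers _ _ _ (@before n')); last first.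
  by move=> s t /eqP; rewrite eclass_eq; apply: before_equiv.
rewrite [RHS]big_mkcond; apply: eq_bigr => A _; case: ifPn => [ord0_notin_A | /negPn ord0_A].
  by rewrite card_fiber //; congr (_ * g c 1 _); rewrite cardsCs setCK card_ord.
apply/eqP; rewrite cards_eq0 -subset0; apply/subsetP => C /imsetP[s].
by rewrite inE => /eqP sA; have := ord0_notin_before s; rewrite sA ord0_A.
Qed.

Lemma f_succ c n : f c n.+1 = \sum_(k < n.+1) 'C(n, k) * (f c k * g c 1 (n.+1 - k)).
Proof.
rewrite f_sum_before (eq_bigl (fun A : {set 'I_n.+1} => A \subset [set~ ord0])); last first.
  by move=> A; rewrite subsets_disjoint setCK disjoint_sym disjoints1.
by rewrite (sum_subsets_card _ (fun k => f c k * g c 1 (n.+1 - k))) cardsC1 card_ord.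
Qed.

Theorem theorem3p4 (c : nat) (hc : 1 <= c) (n : nat) :
  f c n = if n < c.+1 then n`!
          else \sum_(1 <= j < n.+1) f c (j - 1) * g c 1 (n - j + 1) * 'C(n - 1, j - 1).
Proof.
case: ltnP => [n_le_c | c_lt_n]; first exact: f_small.
case: n c_lt_n => [|n] // _; rewrite f_succ big_add1 big_mkord.
apply: eq_bigr => k _; have k_le_n : k <= n by rewrite -ltnS.
by rewrite !subn1 /= subSS addn1 -subSn // mulnC.
Qed.
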